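(* Let $a,b,c$ be real numbers with $0<a,b<+\infty$ and $a+b<c<a+b+1$. Define $$P(a,b,c):=\frac{\Gamma(c)\Gamma(c-a-b)}{\Gamma(c-a)\Gamma(c-b)},\qquad Q(a,b,c):=\frac{\Gamma(c)\Gamma(a+b+1-c)}{(c-a-b)\Gamma(a)\Gamma(b)},$$ and $q(a,b,c):=Q(a,b,c)$ if $P(a,b,c)\geq Q(a,b,c)$, $q(a,b,c):=P(a,b,c)-1$ if $P(a,b,c)<Q(a,b,c)$. Then for all $w\in(0,1)$, $$F(a,b,c;w)^2>P(a,b,c)^2-2P(a,b,c)Q(a,b,c)(1-w)^{c-a-b}+q(a,b,c)^2(1-w)^{2(c-a-b)}.$$
   Context: $F(\alpha,\beta,\gamma;w)$ denotes the Gauss hypergeometric function ${}_2F_1$ and $\Gamma$ the Gamma function. *)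

From Stdlib Require Import Reals.
From Coquelicot Require Import Coquelicot.
Open Scope R_scope.

Fixpoint pochhammer (x : R) (n : nat) : R :=
  match n with
  | O => 1
  | S m => pochhammer x m * (x + INR m)
  end.

(* Gauss hypergeometric function 2F1(a,b;c;w) as the sum of its power series
   (used here only for w in (0,1) and c > 0, where the series converges). *)
Definition hyp2F1 (a b c w : R) : R :=
  Series (fun n => pochhammer a n * pochhammer b n
                   / (pochhammer c n * INR (Factorial.fact n)) * w ^ n).

(* Euler's Gamma function, Gamma(x) = \int_0^{+oo} t^(x-1) e^(-t) dt,
   (used here only for x > 0, where the improper integral converges). *)
Definition Gamma (x : R) : R :=
  RInt_gen (fun t => Rpower t (x - 1) * exp (- t))
           (at_right 0) (Rbar_locally p_infty).

Definition Pfun (a b c : R) : R :=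
  Gamma c * Gamma (c - a - b) / (Gamma (c - a) * Gamma (c - b)).

Definition Qfun (a b c : R) : R :=
  Gamma c * Gamma (a + b + 1 - c) / ((c - a - b) * Gamma a * Gamma b).

Definition qfun (a b c : R) : R :=
  if Rle_dec (Qfun a b c) (Pfun a b c) then Qfun a b c else Pfun a b c - 1.

From Stdlib Require Import Reals Lra Lia Psatz Factorial.
From Coquelicot Require Import Coquelicot.
Open Scope R_scope.

(* Write A_n for the coefficients of F(a,b,c;w) and s = c - a - b, sg = 1 - s.
   Raabe's test gives convergence of F(a,b,c;1) = sum A_n and n A_n -> 0, hence the
   contiguous relation s F(a,b,c;1) = (c-a)(c-b)/c F(a,b,c+1;1).  Iterating it n times and
   using F >= 1 bounds F(a,b,c;1) below by a ratio of Pochhammer symbols which is >= 1 and,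
   by Gauss's product formula for Gamma (obtained from the integral through
   int_0^n t^(x-1) (1 - t/n)^n dt), tends to P; so 1 <= P <= F(a,b,c;1).
   Next, A_(k+1) = r_k beta_k / (k+1) with beta_k = (sg)_k / k! and r_k increasing to s Q, so
   A_(k+1) < Q (beta_k - beta_(k+1)); the tails of sum A_n are therefore at most Q beta_m,
   strictly so for m = 0.  Abel summation together with sum beta_m w^m = (1-w)^(-sg) turns this
   into F(a,b,c;1) - F(a,b,c;w) < Q (1-w)^s, i.e. F(w) > P - Q (1-w)^s with F(w) >= 1, and the
   claim is elementary algebra in the two cases defining q. *)

Lemma Rpower_pos (t y : R) : 0 < Rpower t y.
Proof. apply exp_pos. Qed.

Lemma exp_mul_INR (n : nat) (u : R) : exp (INR n * u) = exp u ^ n.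
Proof.
  rewrite <- Rpower_pow by apply exp_pos.
  unfold Rpower. rewrite ln_exp, Rmult_comm. reflexivity.
Qed.

Lemma pow_1_plus_le_exp (m : nat) (t : R) : (0 < m)%nat -> 0 <= t ->
  (1 + t) ^ m <= INR m ^ m * exp t.
Proof.
  intros Hm Ht.
  assert (Hm1 : 1 <= INR m) by (apply (le_INR 1); lia).
  replace (exp t) with (exp (t / INR m) ^ m)
    by (rewrite <- exp_mul_INR; f_equal; field; lra).
  replace ((1 + t) ^ m) with (INR m ^ m * ((1 + t) / INR m) ^ m)
    by (rewrite <- Rpow_mult_distr; f_equal; field; lra).
  apply Rmult_le_compat_l; [apply pow_le; lra|].
  apply pow_incr; split; [apply Rdiv_le_0_compat; lra|].
  apply Rle_trans with (1 + t / INR m); [|apply exp_ineq1_le].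
  assert (/ INR m <= 1) by (rewrite <- Rinv_1; apply Rinv_le_contravar; lra).
  unfold Rdiv. rewrite Rmult_plus_distr_r. lra.
Qed.

Lemma Rpower_le_pow_1_plus (t y : R) (N : nat) : 0 < t -> 0 <= y <= INR N ->
  Rpower t y <= (1 + t) ^ N.
Proof.
  intros Ht Hy.
  apply Rle_trans with (Rpower (1 + t) y); [apply Rle_Rpower_l; lra|].
  rewrite <- Rpower_pow by lra. apply Rle_Rpower; lra.
Qed.

Lemma Rpower_mul_exp_neg_le (y : R) : 0 <= y -> exists K, 0 < K /\
  forall t, 0 < t -> Rpower t y * exp (- t) <= K / (1 + t) ^ 2.
Proof.
  intros Hy. destruct (INR_unbounded y) as [N HN].
  exists (INR (N + 2) ^ (N + 2)).
  split; [apply pow_lt, lt_0_INR; lia|].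
  intros t Ht.
  assert (Hpow := Rpower_le_pow_1_plus t y N Ht (conj Hy (Rlt_le _ _ HN))).
  assert (Hexp := pow_1_plus_le_exp (N + 2) t ltac:(lia) ltac:(lra)).
  rewrite pow_add in Hexp.
  assert (0 < (1 + t) ^ 2) by (apply pow_lt; lra).
  assert (Eexp : exp (- t) * exp t = 1) by (rewrite <- exp_plus, Rplus_opp_l; apply exp_0).
  apply Rle_trans with ((1 + t) ^ N * exp (- t));
    [apply Rmult_le_compat_r; [left; apply exp_pos | exact Hpow]|].
  apply Rmult_le_reg_r with ((1 + t) ^ 2 * exp t); [apply Rmult_lt_0_compat; [lra | apply exp_pos]|].
  replace ((1 + t) ^ N * exp (- t) * ((1 + t) ^ 2 * exp t))
    with ((1 + t) ^ N * (1 + t) ^ 2 * (exp (- t) * exp t)) by ring.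
  replace (INR (N + 2) ^ (N + 2) / (1 + t) ^ 2 * ((1 + t) ^ 2 * exp t))
    with (INR (N + 2) ^ (N + 2) * exp t) by (field; lra).
  rewrite Eexp, Rmult_1_r. exact Hexp.
Qed.

Lemma Rpower_vanishing (x d : R) : 0 < x -> 0 < d ->
  exists eta, 0 < eta /\ forall e, 0 < e <= eta -> Rpower e x < d.
Proof.
  intros Hx Hd. exists (Rpower (d / 2) (/ x)). split; [apply Rpower_pos|].
  intros e He.
  apply Rle_lt_trans with (Rpower (Rpower (d / 2) (/ x)) x); [apply Rle_Rpower_l; lra|].
  rewrite Rpower_mult, Rinv_l, Rpower_1 by lra. lra.
Qed.

Lemma le_of_le_add_Rpower (A B C x r : R) : 0 < x -> 0 < r ->
  (forall e, 0 < e <= r -> A <= B + C * Rpower e x) -> A <= B.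
Proof.
  intros Hx Hr H. apply le_epsilon. intros d Hd.
  assert (HC : 0 < Rabs C + 1) by (assert (H0 := Rabs_pos C); lra).
  destruct (Rpower_vanishing x (d / (Rabs C + 1)) Hx) as [eta [Heta Hsmall]];
    [apply Rdiv_lt_0_compat; lra|].
  set (e := Rmin eta r).
  assert (He : 0 < e) by (apply Rmin_glb_lt; lra).
  assert (Hsm : Rpower e x < d / (Rabs C + 1)) by (apply Hsmall; split; [lra | apply Rmin_l]).
  assert (HCe : C * Rpower e x <= (Rabs C + 1) * Rpower e x).
  { assert (Hp := Rpower_pos e x). assert (C <= Rabs C) by apply RRle_abs. nra. }
  assert ((Rabs C + 1) * Rpower e x < d).
  { apply Rmult_lt_compat_l with (r := Rabs C + 1) in Hsm; [|lra].
    replace ((Rabs C + 1) * (d / (Rabs C + 1))) with d in Hsm by (field; lra). exact Hsm. }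
  specialize (H e (conj He (Rmin_r eta r))). lra.
Qed.

Lemma Bernoulli_le (n : nat) (v : R) : 0 <= v <= 1 -> 1 - INR n * v <= (1 - v) ^ n.
Proof.
  intros Hv. induction n as [|n IH]; [simpl; lra|].
  rewrite S_INR. simpl.
  assert (0 <= (1 - v) ^ n) by (apply pow_le; lra).
  assert (0 <= INR n) by apply pos_INR.
  nra.
Qed.

Lemma pow_1_minus_le_exp_neg (N : nat) (t : R) : (1 <= N)%nat -> 0 <= t <= INR N ->
  (1 - t / INR N) ^ N <= exp (- t).
Proof.
  intros HN Ht. assert (HN1 : 1 <= INR N) by (apply (le_INR 1); lia).
  replace (exp (- t)) with (exp (- t / INR N) ^ N)
    by (rewrite <- exp_mul_INR; f_equal; field; lra).
  apply pow_incr. split.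
  - assert (t / INR N <= 1) by (apply (Rdiv_le_1 t (INR N)); lra). lra.
  - replace (1 - t / INR N) with (1 + (- t / INR N)) by (unfold Rdiv; ring).
    apply exp_ineq1_le.
Qed.

Lemma exp_neg_le_pow_1_minus (N : nat) (t : R) : (1 <= N)%nat -> 0 <= t <= INR N ->
  exp (- t) <= (1 - t / INR N) ^ N + t ^ 2 * exp (- t) / INR N.
Proof.
  intros HN Ht. assert (HN1 : 1 <= INR N) by (apply (le_INR 1); lia).
  assert (Hu : 0 <= t / INR N <= 1).
  { split; [apply Rdiv_le_0_compat; lra | apply (Rdiv_le_1 t (INR N)); lra]. }
  assert (Hplus : (1 + t / INR N) ^ N <= exp t).
  { replace (exp t) with (exp (t / INR N) ^ N) by (rewrite <- exp_mul_INR; f_equal; field; lra).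
    apply pow_incr. split; [lra | apply exp_ineq1_le]. }
  (* (1 + u)^N (1 - u)^N = (1 - u^2)^N >= 1 - N u^2 *)
  assert (Hprod : 1 - t ^ 2 / INR N <= (1 + t / INR N) ^ N * (1 - t / INR N) ^ N).
  { rewrite <- Rpow_mult_distr.
    replace ((1 + t / INR N) * (1 - t / INR N)) with (1 - (t / INR N) ^ 2) by ring.
    eapply Rle_trans; [|apply Bernoulli_le; split; [apply pow_le | simpl]; nra].
    right. field. lra. }
  assert (0 <= (1 - t / INR N) ^ N) by (apply pow_le; lra).
  assert (Hle : 1 - t ^ 2 / INR N <= exp t * (1 - t / INR N) ^ N).
  { eapply Rle_trans; [apply Hprod|]. apply Rmult_le_compat_r; assumption. }
  assert (He := exp_pos (- t)).
  apply Rmult_le_compat_l with (r := exp (- t)) in Hle; [|lra].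
  rewrite <- Rmult_assoc, <- exp_plus, Rplus_opp_l, exp_0 in Hle.
  unfold Rdiv in *. nra.
Qed.

Lemma is_derive_Rpower (y t : R) : 0 < t ->
  is_derive (fun u => Rpower u y) t (y * Rpower t (y - 1)).
Proof. intros Ht. apply is_derive_Reals, derivable_pt_lim_power, Ht. Qed.

Lemma ex_derive_Rpower_mul (y t : R) (g : R -> R) : 0 < t -> ex_derive g t ->
  ex_derive (fun u => Rpower u y * g u) t.
Proof.
  intros Ht Hg. apply ex_derive_mult; [|exact Hg].
  eexists. apply is_derive_Rpower, Ht.
Qed.

Lemma pos_of_Rmin_le (a b t : R) : 0 < a -> 0 < b -> Rmin a b <= t -> 0 < t.
Proof. intros Ha Hb Ht. apply Rlt_le_trans with (Rmin a b); [apply Rmin_glb_lt|]; assumption. Qed.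

Lemma ex_RInt_Rpower_mul (y a b : R) (g : R -> R) : 0 < a -> 0 < b ->
  (forall t, 0 < t -> ex_derive g t) -> ex_RInt (fun u => Rpower u y * g u) a b.
Proof.
  intros Ha Hb Hg. apply (ex_RInt_continuous (V := R_CompleteNormedModule)).
  intros t Ht. assert (0 < t) by (apply (pos_of_Rmin_le a b); tauto).
  apply (ex_derive_continuous (K := R_AbsRing) (V := R_NormedModule)).
  apply ex_derive_Rpower_mul; auto.
Qed.

Lemma is_RInt_Rpower (x a b : R) : 0 < a -> 0 < b -> x <> 0 ->
  is_RInt (fun t => Rpower t (x - 1)) a b ((Rpower b x - Rpower a x) / x).
Proof.
  intros Ha Hb Hx.
  assert (E : (Rpower b x - Rpower a x) / x = Rpower b x / x - Rpower a x / x) by (field; auto).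
  rewrite E.
  apply (is_RInt_derive (fun t => Rpower t x / x)).
  - intros t Ht. assert (0 < t) by (apply (pos_of_Rmin_le a b); tauto).
    replace (Rpower t (x - 1)) with (/ x * (x * Rpower t (x - 1))) by (field; auto).
    apply (is_derive_ext (fun u => / x * Rpower u x)); [intros u; apply Rmult_comm|].
    apply is_derive_scal, is_derive_Rpower. assumption.
  - intros t Ht. assert (0 < t) by (apply (pos_of_Rmin_le a b); tauto).
    apply (ex_derive_continuous (K := R_AbsRing) (V := R_NormedModule) (fun u => Rpower u (x - 1))).
    eexists. apply is_derive_Rpower. assumption.
Qed.

Lemma is_RInt_inv_1_plus_sq (K a b : R) : 0 <= a -> 0 <= b ->
  is_RInt (fun t => K / (1 + t) ^ 2) a b (K * (/ (1 + a) - / (1 + b))).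
Proof.
  intros Ha Hb.
  assert (E : K * (/ (1 + a) - / (1 + b)) = - K / (1 + b) - - K / (1 + a)) by (field; lra).
  rewrite E.
  apply (is_RInt_derive (fun t => - K / (1 + t))).
  - intros t Ht. assert (0 <= t) by (apply Rle_trans with (Rmin a b); [apply Rmin_glb|]; tauto).
    auto_derive; [lra|]. field. lra.
  - intros t Ht. assert (0 <= t) by (apply Rle_trans with (Rmin a b); [apply Rmin_glb|]; tauto).
    apply (ex_derive_continuous (K := R_AbsRing) (V := R_NormedModule)).
    auto_derive. assert (0 < (1 + t) ^ 2) by (apply pow_lt; lra). lra.
Qed.

Lemma abs_RInt_le_of_oriented_bounds (f : R -> R) (a b B : R) : ex_RInt f a b ->
  (a <= b -> 0 <= RInt f a b <= B) -> (b <= a -> 0 <= RInt f b a <= B) ->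
  Rabs (RInt f a b) <= B.
Proof.
  intros Hf Hab Hba. destruct (Rle_dec a b) as [Hle|Hlt].
  - specialize (Hab Hle). rewrite Rabs_pos_eq; lra.
  - rewrite <- (opp_RInt_swap f b a) by (apply ex_RInt_swap, Hf).
    unfold opp; simpl. rewrite Rabs_Ropp.
    specialize (Hba ltac:(lra)). rewrite Rabs_pos_eq; lra.
Qed.

Lemma filterlim_le_bounds {T : Type} {F : (T -> Prop) -> Prop} {FF : ProperFilter F}
  (g : T -> R) (l L U : R) :
  filterlim g F (locally l) -> F (fun y => L <= g y <= U) -> L <= l <= U.
Proof.
  intros Hg HLU.
  assert (Hnear : forall d, 0 < d -> L - d <= l <= U + d).
  { intros d Hd.
    assert (Hball := proj1 (filterlim_locally g l) Hg (mkposreal d Hd)).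
    destruct (filter_ex _ (filter_and _ _ Hball HLU)) as [y [Hy Hy']].
    change (Rabs (g y - l) < d) in Hy.
    apply Rabs_def2 in Hy. lra. }
  split; apply le_epsilon; intros d Hd; specialize (Hnear d Hd); lra.
Qed.

(** * The Gamma integral *)

Definition Gamma_integrand (x t : R) : R := Rpower t (x - 1) * exp (- t).

Lemma Gamma_integrand_bounds (x t : R) : 0 < t -> 0 <= Gamma_integrand x t <= Rpower t (x - 1).
Proof.
  intros Ht. unfold Gamma_integrand.
  assert (Hp := Rpower_pos t (x - 1)). assert (He := exp_pos (- t)).
  assert (exp (- t) <= 1) by (rewrite <- exp_0; left; apply exp_increasing; lra).
  nra.
Qed.

Lemma ex_RInt_Gamma_integrand (x a b : R) : 0 < a -> 0 < b -> ex_RInt (Gamma_integrand x) a b.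
Proof. intros Ha Hb. apply ex_RInt_Rpower_mul; auto. intros t _. auto_derive. auto. Qed.

Section GammaIntegral.

Variables x K : R.
Hypothesis x_pos : 0 < x.
Hypothesis K_pos : 0 < K.
Hypothesis tail_bound : forall t, 0 < t -> Rpower t (x + 1) * exp (- t) <= K / (1 + t) ^ 2.

Lemma RInt_Gamma_integrand_near_0 (e1 e2 eta : R) : 0 < e1 <= e2 -> e2 <= eta ->
  0 <= RInt (Gamma_integrand x) e1 e2 <= Rpower eta x / x.
Proof.
  intros He Heta. split.
  - apply RInt_ge_0; [lra | apply ex_RInt_Gamma_integrand; lra|].
    intros t Ht. apply Gamma_integrand_bounds. lra.
  - apply Rle_trans with (RInt (fun t => Rpower t (x - 1)) e1 e2).
    + apply RInt_le; [lra | apply ex_RInt_Gamma_integrand; lra | |].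
      * eexists. apply is_RInt_Rpower; lra.
      * intros t Ht. apply Gamma_integrand_bounds. lra.
    + rewrite (is_RInt_unique _ _ _ _ (is_RInt_Rpower x e1 e2 ltac:(lra) ltac:(lra) ltac:(lra))).
      assert (Hp := Rpower_pos e1 x).
      assert (Rpower e2 x <= Rpower eta x) by (apply Rle_Rpower_l; lra).
      unfold Rdiv. apply Rmult_le_compat_r; [left; apply Rinv_0_lt_compat|]; lra.
Qed.

Lemma RInt_Gamma_integrand_tail (M0 M1 M2 : R) : 1 <= M0 <= M1 -> M1 <= M2 ->
  0 <= RInt (Gamma_integrand x) M1 M2 <= K / (1 + M0).
Proof.
  intros HM HM2. split.
  - apply RInt_ge_0; [lra | apply ex_RInt_Gamma_integrand; lra|].
    intros t Ht. apply Gamma_integrand_bounds. lra.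
  - apply Rle_trans with (RInt (fun t => K / (1 + t) ^ 2) M1 M2).
    + apply RInt_le; [lra | apply ex_RInt_Gamma_integrand; lra | |].
      * eexists. apply is_RInt_inv_1_plus_sq; lra.
      * intros t Ht. eapply Rle_trans; [|apply tail_bound; lra].
        unfold Gamma_integrand. apply Rmult_le_compat_r; [left; apply exp_pos|].
        apply Rle_Rpower; lra.
    + rewrite (is_RInt_unique _ _ _ _ (is_RInt_inv_1_plus_sq K M1 M2 ltac:(lra) ltac:(lra))).
      assert (0 < / (1 + M2)) by (apply Rinv_0_lt_compat; lra).
      assert (/ (1 + M1) <= / (1 + M0)) by (apply Rinv_le_contravar; lra).
      unfold Rdiv. nra.
Qed.

Let partial (ab : R * R) : R := RInt (Gamma_integrand x) (fst ab) (snd ab).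

Lemma Gamma_partial_cauchy (eps : posreal) : exists eta M0, 0 < eta /\
  forall e1 e2 M1 M2, 0 < e1 < eta -> 0 < e2 < eta -> M0 < M1 -> M0 < M2 ->
  Rabs (partial (e2, M2) - partial (e1, M1)) < eps.
Proof.
  assert (Heps := cond_pos eps).
  destruct (Rpower_vanishing x (x * eps / 2)) as [eta0 [Heta0 Hsmall]]; [assumption | nra|].
  set (eta := Rmin 1 eta0). set (M0 := Rmax 1 (2 * K / eps)).
  assert (Heta : 0 < eta) by (apply Rmin_glb_lt; lra).
  assert (Heta_small : Rpower eta x / x < eps / 2).
  { apply Rmult_lt_reg_r with x; [assumption|]. unfold Rdiv.
    rewrite Rmult_assoc, Rinv_l by lra.
    replace (eps * / 2 * x) with (x * eps / 2) by (field; lra).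
    rewrite Rmult_1_r. apply Hsmall. split; [lra | apply Rmin_r]. }
  assert (HM0 : 1 <= M0) by apply Rmax_l.
  assert (HM0_large : K / (1 + M0) < eps / 2).
  { assert (2 * K / eps <= M0) by apply Rmax_r.
    apply Rmult_lt_reg_r with (2 * (1 + M0) / eps); [apply Rdiv_lt_0_compat; lra|].
    replace (K / (1 + M0) * (2 * (1 + M0) / eps)) with (2 * K / eps) by (field; lra).
    replace (eps / 2 * (2 * (1 + M0) / eps)) with (1 + M0) by (field; lra). lra. }
  exists eta, M0. split; [exact Heta|].
  intros e1 e2 M1 M2 He1 He2 HM1 HM2. unfold partial; simpl.
  assert (Hex : forall a b, 0 < a -> 0 < b -> ex_RInt (Gamma_integrand x) a b)
    by (intros; apply ex_RInt_Gamma_integrand; assumption).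
  rewrite <- (RInt_Chasles (V := R_CompleteNormedModule) _ e2 e1 M2) by (apply Hex; lra).
  rewrite <- (RInt_Chasles (V := R_CompleteNormedModule) _ e1 M1 M2) by (apply Hex; lra).
  unfold plus; simpl.
  assert (Hnear0 : Rabs (RInt (Gamma_integrand x) e2 e1) <= Rpower eta x / x).
  { apply abs_RInt_le_of_oriented_bounds; [apply Hex; lra | |];
      intros; apply RInt_Gamma_integrand_near_0; lra. }
  assert (Htail : Rabs (RInt (Gamma_integrand x) M1 M2) <= K / (1 + M0)).
  { apply abs_RInt_le_of_oriented_bounds; [apply Hex; lra | |];
      intros; apply RInt_Gamma_integrand_tail; lra. }
  replace (RInt (Gamma_integrand x) e2 e1 + (RInt (Gamma_integrand x) e1 M1
             + RInt (Gamma_integrand x) M1 M2) - RInt (Gamma_integrand x) e1 M1)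
    with (RInt (Gamma_integrand x) e2 e1 + RInt (Gamma_integrand x) M1 M2) by ring.
  eapply Rle_lt_trans; [apply Rabs_triang | lra].
Qed.

Lemma Gamma_correct :
  filterlim partial (filter_prod (at_right 0) (Rbar_locally p_infty)) (locally (Gamma x)).
Proof.
  destruct (proj1 (filterlim_locally_cauchy (U := R_CompleteNormedModule)
    (F := filter_prod (at_right 0) (Rbar_locally p_infty)) partial)) as [y Hy].
  - intros eps. destruct (Gamma_partial_cauchy eps) as [eta [M0 [Heta Hcauchy]]].
    exists (fun ab => 0 < fst ab < eta /\ M0 < snd ab). split.
    + apply Filter_prod with (fun e => 0 < e < eta) (fun M => M0 < M).
      * exists (mkposreal eta Heta). intros e He He0. split; [exact He0|].
        change (Rabs (e - 0) < eta) in He. rewrite Rminus_0_r in He.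
        apply Rabs_def2 in He. lra.
      * exists M0. tauto.
      * intros e M He HM. split; assumption.
    + intros [e1 M1] [e2 M2] [He1 HM1] [He2 HM2]. apply Hcauchy; assumption.
  - replace (Gamma x) with y; [exact Hy|]. symmetry.
    unfold Gamma. change (fun t => Rpower t (x - 1) * exp (- t)) with (Gamma_integrand x).
    apply (is_RInt_gen_unique (V := R_CompleteNormedModule)).
    apply filterlimi_lim_ext_loc with (f := partial); [|exact Hy].
    apply Filter_prod with (fun e => 0 < e) (fun M => 0 < M).
    + exists (mkposreal 1 Rlt_0_1). intros; assumption.
    + exists 0. tauto.
    + intros e M He HM. apply (RInt_correct (V := R_CompleteNormedModule)).
      apply ex_RInt_Gamma_integrand; assumption.
Qed.

Lemma Gamma_partial_bounds (e M : R) : 0 < e <= 1 -> 1 <= M ->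
  RInt (Gamma_integrand x) e M <= Gamma x
  <= RInt (Gamma_integrand x) e M + Rpower e x / x + K / (1 + M).
Proof.
  intros He HM.
  apply (filterlim_le_bounds (F := filter_prod (at_right 0) (Rbar_locally p_infty)) partial);
    [exact Gamma_correct|].
  apply Filter_prod with (fun e' => 0 < e' < e) (fun M' => M < M').
  - exists (mkposreal e ltac:(lra)). intros e' He' He'0. split; [exact He'0|].
    change (Rabs (e' - 0) < e) in He'. rewrite Rminus_0_r in He'.
    apply Rabs_def2 in He'. lra.
  - exists M. tauto.
  - intros e' M' He' HM'. unfold partial; simpl.
    assert (Hex : forall a b, 0 < a -> 0 < b -> ex_RInt (Gamma_integrand x) a b)
      by (intros; apply ex_RInt_Gamma_integrand; assumption).
    rewrite <- (RInt_Chasles (V := R_CompleteNormedModule) _ e' e M') by (apply Hex; lra).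
    rewrite <- (RInt_Chasles (V := R_CompleteNormedModule) _ e M M') by (apply Hex; lra).
    unfold plus; simpl.
    assert (H0 := RInt_Gamma_integrand_near_0 e' e e ltac:(lra) ltac:(lra)).
    assert (Hinf := RInt_Gamma_integrand_tail M M M' ltac:(lra) ltac:(lra)).
    lra.
Qed.

End GammaIntegral.

(** * Gauss's product formula *)

Lemma pochhammer_S_shift (x : R) (m : nat) : pochhammer x (S m) = x * pochhammer (x + 1) m.
Proof.
  induction m as [|m IH]; [simpl; ring|].
  change (pochhammer x (S (S m))) with (pochhammer x (S m) * (x + INR (S m))).
  rewrite IH. simpl pochhammer at 2. rewrite S_INR. ring.
Qed.

Lemma pochhammer_pos (x : R) (m : nat) : 0 < x -> 0 < pochhammer x m.
Proof.
  intros Hx. induction m as [|m IH]; simpl; [lra|].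
  apply Rmult_lt_0_compat; [exact IH|]. assert (0 <= INR m) by apply pos_INR. lra.
Qed.

Definition gauss_kernel (n x : R) (m : nat) (t : R) : R := Rpower t (x - 1) * (1 - t / n) ^ m.

Definition gauss_prod (n x : R) (m : nat) : R :=
  Rpower n x * INR (fact m) / pochhammer x (S m).

Lemma ex_RInt_gauss_kernel (n x : R) (m : nat) (a b : R) : 0 < a -> 0 < b ->
  ex_RInt (gauss_kernel n x m) a b.
Proof. intros Ha Hb. apply ex_RInt_Rpower_mul; auto. intros t _. auto_derive. auto. Qed.

Lemma RInt_gauss_kernel_O (n x e : R) : 0 < n -> 0 < x -> 0 < e ->
  RInt (gauss_kernel n x 0) e n = gauss_prod n x 0 - Rpower e x / x.
Proof.
  intros Hn Hx He. unfold gauss_kernel, gauss_prod.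
  rewrite (RInt_ext (V := R_CompleteNormedModule) _ (fun t => Rpower t (x - 1)))
    by (intros; simpl; apply Rmult_1_r).
  rewrite (is_RInt_unique _ _ _ _ (is_RInt_Rpower x e n He Hn ltac:(lra))).
  simpl. field. lra.
Qed.

(* Integration by parts, with u = t^x / x and v = (1 - t/n)^(m+1). *)
Lemma RInt_gauss_kernel_S (n x e : R) (m : nat) : 0 < n -> 0 < x -> 0 < e ->
  RInt (gauss_kernel n x (S m)) e n
  = - (Rpower e x / x * (1 - e / n) ^ S m)
    + INR (S m) / (n * x) * RInt (gauss_kernel n (x + 1) m) e n.
Proof.
  intros Hn Hx He.
  set (c := INR (S m) / (n * x)).
  set (u := fun t => / x * Rpower t x * (1 - t / n) ^ S m).
  set (du := fun t => gauss_kernel n x (S m) t - c * gauss_kernel n (x + 1) m t).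
  assert (Hdu : forall t, 0 < t -> is_derive u t (du t)).
  { intros t Ht. unfold u, du, gauss_kernel, c.
    apply (is_derive_ext (fun t => (/ x * Rpower t x) * (1 - t / n) ^ S m)); [reflexivity|].
    evar (l : R). replace (_ - _) with l; unfold l.
    - apply (is_derive_mult (fun t => / x * Rpower t x) (fun t => (1 - t / n) ^ S m)).
      + apply is_derive_scal, is_derive_Rpower, Ht.
      + auto_derive_fun (fun t => (1 - t / n) ^ S m). intros Hd. apply Hd. auto.
      + intros; apply Rmult_comm.
    - unfold plus, mult; simpl. replace (x + 1 - 1) with x by ring.
      change (1 + - (t * / n)) with (1 - t / n). field. lra. }
  assert (Hcont : forall t, Rmin e n <= t <= Rmax e n -> continuous du t).
  { intros t Ht. assert (0 < t) by (apply (pos_of_Rmin_le e n); tauto).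
    apply (ex_derive_continuous (K := R_AbsRing) (V := R_NormedModule)).
    apply (ex_derive_minus (K := R_AbsRing) (V := R_NormedModule));
      [|apply (ex_derive_scal (fun t => gauss_kernel n (x + 1) m t))];
      apply ex_derive_Rpower_mul; auto; auto_derive; auto. }
  assert (Hparts : is_RInt du e n (u n - u e)).
  { apply (is_RInt_derive u du); [|exact Hcont].
    intros t Ht. apply Hdu. apply (pos_of_Rmin_le e n); tauto. }
  rewrite (RInt_ext (V := R_CompleteNormedModule) _ (fun t => du t + c * gauss_kernel n (x + 1) m t))
    by (intros t _; unfold du; cbn; ring).
  rewrite (RInt_plus (V := R_CompleteNormedModule)); [|eexists; exact Hparts|].
  2: { apply (ex_RInt_scal (V := R_CompleteNormedModule)). apply ex_RInt_gauss_kernel; lra. }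
  rewrite (RInt_scal (V := R_CompleteNormedModule)) by (apply ex_RInt_gauss_kernel; lra).
  rewrite (is_RInt_unique _ _ _ _ Hparts). unfold u.
  replace (1 - n / n) with 0 by (field; lra).
  unfold plus, scal; simpl. unfold mult; simpl. field. lra.
Qed.

Lemma gauss_prod_S (n x : R) (m : nat) : 0 < n -> 0 < x ->
  gauss_prod n x (S m) = INR (S m) / (n * x) * gauss_prod n (x + 1) m.
Proof.
  intros Hn Hx. unfold gauss_prod.
  rewrite (pochhammer_S_shift x (S m)), Rpower_plus, Rpower_1 by lra.
  change (fact (S m)) with (S m * fact m)%nat. rewrite mult_INR.
  assert (0 < pochhammer (x + 1) (S m)) by (apply pochhammer_pos; lra).
  field. lra.
Qed.

Lemma gauss_prod_pos (n x : R) (m : nat) : 0 < n -> 0 < x -> 0 < gauss_prod n x m.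
Proof.
  intros Hn Hx. unfold gauss_prod. apply Rdiv_lt_0_compat; [|apply pochhammer_pos, Hx].
  apply Rmult_lt_0_compat; [apply Rpower_pos | apply lt_0_INR, lt_O_fact].
Qed.

Lemma RInt_gauss_kernel_bounds (n : R) (m : nat) (x : R) : 0 < n -> 0 < x ->
  exists C, forall e, 0 < e <= n ->
  gauss_prod n x m - C * Rpower e x <= RInt (gauss_kernel n x m) e n <= gauss_prod n x m.
Proof.
  intros Hn. revert x. induction m as [|m IH]; intros x Hx.
  - exists (/ x). intros e He. rewrite RInt_gauss_kernel_O by lra.
    assert (0 < Rpower e x / x) by (apply Rdiv_lt_0_compat; [apply Rpower_pos | exact Hx]).
    unfold Rdiv in *. lra.
  - destruct (IH (x + 1) ltac:(lra)) as [C HC].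
    set (c := INR (S m) / (n * x)).
    assert (Hc : 0 < c) by (apply Rdiv_lt_0_compat; [apply lt_0_INR; lia | nra]).
    exists (/ x + c * Rabs C * n). intros e He.
    rewrite RInt_gauss_kernel_S, gauss_prod_S by lra. fold c.
    specialize (HC e He).
    assert (Hq : 0 <= (1 - e / n) ^ S m <= 1).
    { assert (0 < e / n <= 1) by (split; [apply Rdiv_lt_0_compat | apply (Rdiv_le_1 e n)]; lra).
      split; [apply pow_le; lra|]. apply Rle_trans with (1 ^ S m); [apply pow_incr; split; lra | rewrite pow1; lra]. }
    set (q := (1 - e / n) ^ S m) in *. clearbody q.
    assert (Hpe := Rpower_pos e x).
    assert (Hshift : Rpower e (x + 1) <= Rpower e x * n).
    { rewrite Rpower_plus, Rpower_1 by lra. apply Rmult_le_compat_l; lra. }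
    assert (Hboundary : 0 <= Rpower e x / x * q <= Rpower e x / x).
    { assert (0 < Rpower e x / x) by (apply Rdiv_lt_0_compat; lra).
      split; [apply Rmult_le_pos; lra|].
      rewrite <- (Rmult_1_r (Rpower e x / x)) at 2. apply Rmult_le_compat_l; lra. }
    assert (HCabs : c * (C * Rpower e (x + 1)) <= c * Rabs C * n * Rpower e x).
    { assert (C <= Rabs C) by apply RRle_abs. assert (0 <= Rabs C) by apply Rabs_pos.
      assert (Hp1 := Rpower_pos e (x + 1)).
      replace (c * Rabs C * n * Rpower e x) with (c * (Rabs C * (Rpower e x * n))) by ring.
      apply Rmult_le_compat_l; [lra|]. nra. }
    assert (HcI := Rmult_le_compat_l c _ _ (Rlt_le _ _ Hc) (proj1 HC)).
    assert (HcI' := Rmult_le_compat_l c _ _ (Rlt_le _ _ Hc) (proj2 HC)).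
    unfold Rdiv in *. split; lra.
Qed.

Lemma gauss_kernel_le_Gamma_integrand (N : nat) (x t : R) : (1 <= N)%nat -> 0 < t <= INR N ->
  gauss_kernel (INR N) x N t <= Gamma_integrand x t.
Proof.
  intros HN Ht. apply Rmult_le_compat_l; [left; apply Rpower_pos|].
  apply pow_1_minus_le_exp_neg; [exact HN | lra].
Qed.

Lemma Gamma_integrand_le_gauss_kernel (N : nat) (x t : R) : (1 <= N)%nat -> 0 < t <= INR N ->
  Gamma_integrand x t <= gauss_kernel (INR N) x N t + / INR N * (Rpower t (x + 1) * exp (- t)).
Proof.
  intros HN Ht. unfold gauss_kernel, Gamma_integrand.
  replace (Rpower t (x + 1)) with (Rpower t (x - 1) * t ^ 2)
    by (rewrite <- Rpower_pow, <- Rpower_plus by lra; f_equal; simpl; ring).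
  assert (Hexp := exp_neg_le_pow_1_minus N t HN ltac:(lra)).
  apply Rmult_le_compat_l with (r := Rpower t (x - 1)) in Hexp; [|left; apply Rpower_pos].
  eapply Rle_trans; [exact Hexp|]. right. unfold Rdiv. ring.
Qed.

Section GaussLimit.

Variables x K : R.
Hypothesis x_pos : 0 < x.
Hypothesis K_pos : 0 < K.
Hypothesis tail_bound : forall t, 0 < t -> Rpower t (x + 1) * exp (- t) <= K / (1 + t) ^ 2.

Lemma RInt_Gamma_integrand_le_gauss_prod (N : nat) (e : R) : (1 <= N)%nat -> 0 < e <= 1 ->
  RInt (Gamma_integrand x) e (INR N) <= gauss_prod (INR N) x N + K / INR N.
Proof.
  intros HN He. assert (HN1 : 1 <= INR N) by (apply (le_INR 1); lia).
  set (g := fun t => Rpower t (x + 1) * exp (- t)).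
  assert (Hg : ex_RInt g e (INR N)) by (apply ex_RInt_Rpower_mul; [lra | lra | intros; auto_derive; auto]).
  assert (Hk : ex_RInt (gauss_kernel (INR N) x N) e (INR N)) by (apply ex_RInt_gauss_kernel; lra).
  assert (Hsplit : RInt (Gamma_integrand x) e (INR N)
                   <= RInt (gauss_kernel (INR N) x N) e (INR N) + / INR N * RInt g e (INR N)).
  { rewrite <- (RInt_scal (V := R_CompleteNormedModule)) by exact Hg.
    rewrite <- (RInt_plus (V := R_CompleteNormedModule));
      [| exact Hk | apply (ex_RInt_scal (V := R_CompleteNormedModule)), Hg].
    apply RInt_le; [lra | apply ex_RInt_Gamma_integrand; lra | |].
    - apply (ex_RInt_plus (V := R_CompleteNormedModule));
        [exact Hk | apply (ex_RInt_scal (V := R_CompleteNormedModule)), Hg].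
    - intros t Ht. apply Gamma_integrand_le_gauss_kernel; [exact HN | lra]. }
  assert (Hgint : RInt g e (INR N) <= K).
  { apply Rle_trans with (RInt (fun t => K / (1 + t) ^ 2) e (INR N)).
    - apply RInt_le; [lra | exact Hg | eexists; apply is_RInt_inv_1_plus_sq; lra |].
      intros t Ht. apply tail_bound. lra.
    - rewrite (is_RInt_unique _ _ _ _ (is_RInt_inv_1_plus_sq K e (INR N) ltac:(lra) ltac:(lra))).
      assert (0 < / (1 + INR N)) by (apply Rinv_0_lt_compat; lra).
      assert (/ (1 + e) <= 1) by (rewrite <- Rinv_1; apply Rinv_le_contravar; lra).
      nra. }
  destruct (RInt_gauss_kernel_bounds (INR N) N x ltac:(lra) x_pos) as [C HC].
  assert (Hkernel := proj2 (HC e ltac:(lra))).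
  assert (/ INR N * RInt g e (INR N) <= / INR N * K)
    by (apply Rmult_le_compat_l; [left; apply Rinv_0_lt_compat; lra | exact Hgint]).
  unfold Rdiv. lra.
Qed.

Lemma Gamma_gauss_prod_bounds (N : nat) : (1 <= N)%nat ->
  gauss_prod (INR N) x N <= Gamma x <= gauss_prod (INR N) x N + 2 * K / INR N.
Proof.
  intros HN. assert (HN1 : 1 <= INR N) by (apply (le_INR 1); lia).
  destruct (RInt_gauss_kernel_bounds (INR N) N x ltac:(lra) x_pos) as [C HC].
  split.
  - apply (le_of_le_add_Rpower _ _ C x 1 x_pos Rlt_0_1). intros e He.
    assert (Hpartial := proj1 (Gamma_partial_bounds x K x_pos K_pos tail_bound e (INR N) He HN1)).
    assert (RInt (gauss_kernel (INR N) x N) e (INR N) <= RInt (Gamma_integrand x) e (INR N)).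
    { apply RInt_le; [lra | apply ex_RInt_gauss_kernel; lra | apply ex_RInt_Gamma_integrand; lra |].
      intros t Ht. apply gauss_kernel_le_Gamma_integrand; [exact HN | lra]. }
    assert (Hkernel := proj1 (HC e ltac:(lra))). lra.
  - apply (le_of_le_add_Rpower _ _ (/ x) x 1 x_pos Rlt_0_1). intros e He.
    assert (Hpartial := proj2 (Gamma_partial_bounds x K x_pos K_pos tail_bound e (INR N) He HN1)).
    assert (Hgauss := RInt_Gamma_integrand_le_gauss_prod N e HN He).
    assert (K / (1 + INR N) <= K / INR N).
    { unfold Rdiv. apply Rmult_le_compat_l; [lra|]. apply Rinv_le_contravar; lra. }
    replace (2 * K / INR N) with (K / INR N + K / INR N) by (field; lra).
    unfold Rdiv in *. lra.
Qed.

End GaussLimit.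

Lemma is_lim_seq_gauss_prod (x : R) : 0 < x ->
  is_lim_seq (fun N => gauss_prod (INR N) x N) (Gamma x).
Proof.
  intros Hx. destruct (Rpower_mul_exp_neg_le (x + 1) ltac:(lra)) as [K [HK tail_bound]].
  apply is_lim_seq_spec. intros eps. assert (Heps := cond_pos eps).
  destruct (INR_unbounded (2 * K / eps)) as [N0 HN0].
  exists (S N0). intros N HN.
  assert (HNlarge : 2 * K / eps < INR N) by (apply Rlt_le_trans with (INR N0); [lra | apply le_INR; lia]).
  assert (HNpos : 0 < INR N) by (apply lt_0_INR; lia).
  assert (Hsmall : 2 * K / INR N < eps).
  { apply Rmult_lt_reg_r with (INR N / eps); [apply Rdiv_lt_0_compat; lra|].
    replace (2 * K / INR N * (INR N / eps)) with (2 * K / eps) by (field; lra).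
    replace (eps * (INR N / eps)) with (INR N) by (field; lra). exact HNlarge. }
  destruct (Gamma_gauss_prod_bounds x K Hx HK tail_bound N ltac:(lia)).
  apply Rabs_def1; lra.
Qed.

Lemma Gamma_pos (x : R) : 0 < x -> 0 < Gamma x.
Proof.
  intros Hx. destruct (Rpower_mul_exp_neg_le (x + 1) ltac:(lra)) as [K [HK tail_bound]].
  destruct (Gamma_gauss_prod_bounds x K Hx HK tail_bound 1 (le_n 1)) as [Hlow _].
  assert (0 < gauss_prod (INR 1) x 1) by (apply gauss_prod_pos; simpl; lra).
  lra.
Qed.

(** * The hypergeometric series at 1 *)

Lemma sum_n_Sn_R (u : nat -> R) (n : nat) : sum_n u (S n) = sum_n u n + u (S n).
Proof. apply (sum_Sn (G := R_AbelianMonoid)). Qed.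

Lemma sum_n_O_R (u : nat -> R) : sum_n u 0 = u 0%nat.
Proof. apply (sum_O (G := R_AbelianMonoid)). Qed.

Lemma sum_n_le_add (u : nat -> R) : (forall n, 0 <= u n) ->
  forall m d, sum_n u m <= sum_n u (m + d).
Proof.
  intros Hu m d. induction d as [|d IH]; [rewrite Nat.add_0_r; lra|].
  rewrite Nat.add_succ_r, sum_n_Sn_R. specialize (Hu (S (m + d))). lra.
Qed.

Lemma is_lim_seq_sum_n_Series (u : nat -> R) : ex_series u -> is_lim_seq (sum_n u) (Series u).
Proof. intros Hu. apply Series_correct, Hu. Qed.

Lemma sum_n_le_Series (u : nat -> R) (N : nat) : (forall n, 0 <= u n) -> ex_series u ->
  sum_n u N <= Series u.
Proof.
  intros Hu Hex.
  assert (Hlim := proj1 (is_lim_seq_incr_n _ N _) (is_lim_seq_sum_n_Series u Hex)).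
  apply (is_lim_seq_le (fun _ => sum_n u N) (fun n => sum_n u (n + N)) (sum_n u N) (Series u));
    [| apply is_lim_seq_const | exact Hlim].
  intros n. rewrite Nat.add_comm. apply sum_n_le_add, Hu.
Qed.

Section Raabe.

Variables (u : nat -> R) (delta : R) (N0 : nat).
Hypothesis u_pos : forall n, 0 < u n.
Hypothesis delta_pos : 0 < delta.
Hypothesis raabe : forall n, (N0 <= n)%nat -> delta * u n <= INR n * u n - INR (S n) * u (S n).

Lemma ex_series_raabe : ex_series u.
Proof.
  assert (Htelescope : forall k, delta * sum_n u (N0 + k) + INR (S (N0 + k)) * u (S (N0 + k))
                                 <= delta * sum_n u N0 + INR (S N0) * u (S N0)).
  { induction k as [|k IH]; [rewrite Nat.add_0_r; lra|].
    rewrite Nat.add_succ_r, sum_n_Sn_R.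
    specialize (raabe (S (N0 + k)) ltac:(lia)). lra. }
  set (B := sum_n u N0 + INR (S N0) * u (S N0) / delta).
  assert (Hbound : forall M, sum_n u M <= B).
  { intros M. assert (HB0 : 0 <= INR (S N0) * u (S N0) / delta).
    { apply Rdiv_le_0_compat; [|lra]. apply Rmult_le_pos; [apply pos_INR | left; apply u_pos]. }
    destruct (Nat.le_gt_cases M N0) as [HM|HM].
    - apply Rle_trans with (sum_n u N0); [|unfold B; lra].
      replace N0 with (M + (N0 - M))%nat by lia.
      apply sum_n_le_add. intros; left; apply u_pos.
    - replace M with (N0 + (M - N0))%nat by lia.
      specialize (Htelescope (M - N0)%nat).
      assert (0 <= INR (S (N0 + (M - N0))) * u (S (N0 + (M - N0))))
        by (apply Rmult_le_pos; [apply pos_INR | left; apply u_pos]).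
      apply Rmult_le_reg_l with delta; [exact delta_pos|].
      unfold B. replace (delta * (sum_n u N0 + INR (S N0) * u (S N0) / delta))
        with (delta * sum_n u N0 + INR (S N0) * u (S N0)) by (field; lra).
      lra. }
  destruct (ex_finite_lim_seq_incr (sum_n u) B) as [l Hl].
  - intros n. rewrite sum_n_Sn_R. specialize (u_pos (S n)). lra.
  - exact Hbound.
  - exists l. exact Hl.
Qed.

(* From N0 on u decreases, so (n - N) u n is at most the Cauchy block u (N+1) + ... + u n. *)
Lemma is_lim_seq_INR_mul_raabe : is_lim_seq (fun n => INR n * u n) 0.
Proof.
  destruct ex_series_raabe as [l Hl]. change (is_lim_seq (sum_n u) l) in Hl.
  assert (Hdecr : forall n, (N0 <= n)%nat -> u (S n) <= u n).
  { intros n Hn. specialize (raabe n Hn). assert (Hun := u_pos n). assert (HuS := u_pos (S n)).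
    rewrite S_INR in raabe. assert (0 <= INR n) by apply pos_INR. nra. }
  assert (Hblock : forall N d, (N0 <= N)%nat -> INR d * u (N + d)%nat <= sum_n u (N + d) - sum_n u N).
  { intros N d HN. induction d as [|d IH]; [rewrite Nat.add_0_r; simpl; lra|].
    rewrite Nat.add_succ_r, sum_n_Sn_R, S_INR.
    specialize (Hdecr (N + d)%nat ltac:(lia)). assert (0 <= INR d) by apply pos_INR.
    assert (INR d * u (S (N + d)) <= INR d * u (N + d)%nat) by (apply Rmult_le_compat_l; auto).
    lra. }
  apply is_lim_seq_spec. intros eps. assert (Heps := cond_pos eps).
  apply is_lim_seq_spec in Hl. destruct (Hl (mkposreal (eps / 4) ltac:(lra))) as [N1 HN1].
  simpl in HN1. set (N := Nat.max N0 N1).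
  exists (S (2 * N)). intros n Hn.
  specialize (Hblock N (n - N)%nat ltac:(lia)).
  replace (N + (n - N))%nat with n in Hblock by lia.
  assert (H1 := HN1 n ltac:(lia)). assert (H2 := HN1 N ltac:(lia)).
  assert (Hhalf : INR n <= 2 * INR (n - N)).
  { rewrite minus_INR by lia. assert (Hn' : INR (S (2 * N)) <= INR n) by (apply le_INR; lia).
    rewrite S_INR, mult_INR in Hn'. simpl in Hn'. lra. }
  assert (Hun := u_pos n).
  assert (Hcauchy : sum_n u n - sum_n u N < eps / 2).
  { apply Rabs_def2 in H1. apply Rabs_def2 in H2. lra. }
  rewrite Rminus_0_r, Rabs_pos_eq by (apply Rmult_le_pos; [apply pos_INR | lra]).
  nra.
Qed.

End Raabe.

Definition hyp_coef (a b c : R) (n : nat) : R :=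
  pochhammer a n * pochhammer b n / (pochhammer c n * INR (fact n)).

Lemma hyp2F1_Series (a b c w : R) : hyp2F1 a b c w = Series (fun n => hyp_coef a b c n * w ^ n).
Proof. reflexivity. Qed.

Lemma hyp_coef_O (a b c : R) : hyp_coef a b c 0 = 1.
Proof. unfold hyp_coef. simpl. field. Qed.

Lemma hyp_coef_S (a b c : R) (n : nat) : 0 < c ->
  hyp_coef a b c (S n) = hyp_coef a b c n * ((a + INR n) * (b + INR n) / ((c + INR n) * INR (S n))).
Proof.
  intros Hc. unfold hyp_coef. simpl pochhammer.
  change (fact (S n)) with (S n * fact n)%nat. rewrite mult_INR.
  assert (0 < pochhammer c n) by (apply pochhammer_pos, Hc).
  assert (0 < INR (fact n)) by (apply lt_0_INR, lt_O_fact).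
  assert (0 < INR (S n)) by (apply lt_0_INR; lia).
  assert (0 <= INR n) by apply pos_INR.
  field. repeat split; lra.
Qed.

Lemma hyp_coef_pos (a b c : R) (n : nat) : 0 < a -> 0 < b -> 0 < c -> 0 < hyp_coef a b c n.
Proof.
  intros Ha Hb Hc. unfold hyp_coef.
  apply Rdiv_lt_0_compat; apply Rmult_lt_0_compat; try (apply pochhammer_pos; assumption).
  apply lt_0_INR, lt_O_fact.
Qed.

Lemma hyp_coef_raabe (a b c : R) (n : nat) : 0 < c ->
  INR n * hyp_coef a b c n - INR (S n) * hyp_coef a b c (S n)
  = hyp_coef a b c n * ((c - a - b) * INR n - a * b) / (c + INR n).
Proof.
  intros Hc. rewrite hyp_coef_S by exact Hc.
  assert (0 <= INR n) by apply pos_INR.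
  rewrite S_INR. field. lra.
Qed.

Section HypergeometricAtOne.

Variables a b c : R.
Hypothesis a_pos : 0 < a.
Hypothesis b_pos : 0 < b.
Hypothesis abc : a + b < c.

Lemma hyp_coef_raabe_bound : exists N0, forall n, (N0 <= n)%nat ->
  (c - a - b) / 2 * hyp_coef a b c n
  <= INR n * hyp_coef a b c n - INR (S n) * hyp_coef a b c (S n).
Proof.
  set (s := c - a - b). assert (Hs : 0 < s) by (unfold s; lra).
  destruct (INR_unbounded ((2 * a * b + s * c) / s)) as [N0 HN0].
  exists N0. intros n Hn.
  rewrite hyp_coef_raabe by lra. fold s.
  assert (HnN : INR N0 <= INR n) by (apply le_INR, Hn).
  assert (Hlarge : 2 * a * b + s * c <= s * INR n).
  { apply Rmult_lt_compat_l with (r := s) in HN0; [|exact Hs].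
    replace (s * ((2 * a * b + s * c) / s)) with (2 * a * b + s * c) in HN0 by (field; lra).
    nra. }
  assert (Hcn : 0 < c + INR n) by (assert (0 <= INR n) by apply pos_INR; lra).
  assert (HA := hyp_coef_pos a b c n a_pos b_pos ltac:(lra)).
  apply Rmult_le_reg_r with (c + INR n); [exact Hcn|].
  replace (hyp_coef a b c n * (s * INR n - a * b) / (c + INR n) * (c + INR n))
    with (hyp_coef a b c n * (s * INR n - a * b)) by (field; lra).
  nra.
Qed.

Lemma ex_series_hyp_coef : ex_series (hyp_coef a b c).
Proof.
  destruct hyp_coef_raabe_bound as [N0 HN0].
  apply (ex_series_raabe _ ((c - a - b) / 2) N0); [|lra|exact HN0].
  intros n. apply hyp_coef_pos; lra.
Qed.

Lemma is_lim_seq_INR_mul_hyp_coef : is_lim_seq (fun n => INR n * hyp_coef a b c n) 0.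
Proof.
  destruct hyp_coef_raabe_bound as [N0 HN0].
  apply (is_lim_seq_INR_mul_raabe _ ((c - a - b) / 2) N0); [|lra|exact HN0].
  intros n. apply hyp_coef_pos; lra.
Qed.

End HypergeometricAtOne.

Lemma hyp_coef_succ_c (a b c : R) (n : nat) : 0 < c ->
  hyp_coef a b (c + 1) n = hyp_coef a b c n * (c / (c + INR n)).
Proof.
  intros Hc. unfold hyp_coef.
  assert (E : pochhammer (c + 1) n = pochhammer c n * (c + INR n) / c).
  { assert (H1 := pochhammer_S_shift c n). simpl in H1. rewrite H1. field. lra. }
  rewrite E.
  assert (0 < pochhammer c n) by (apply pochhammer_pos, Hc).
  assert (0 < INR (fact n)) by (apply lt_0_INR, lt_O_fact).
  assert (0 <= INR n) by apply pos_INR.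
  field. repeat split; lra.
Qed.

Lemma sum_n_hyp_coef_contiguous (a b c : R) (N : nat) : 0 < c ->
  (c - a - b) * sum_n (hyp_coef a b c) N - (c - a) * (c - b) / c * sum_n (hyp_coef a b (c + 1)) N
  = - (INR (S N) * hyp_coef a b c (S N)).
Proof.
  intros Hc. induction N as [|N IH].
  - rewrite !sum_n_O_R, hyp_coef_succ_c, hyp_coef_S, hyp_coef_O by exact Hc. simpl. field. lra.
  - rewrite !sum_n_Sn_R, hyp_coef_succ_c by exact Hc.
    assert (Hraabe := hyp_coef_raabe a b c (S N) Hc).
    assert (0 <= INR (S N)) by apply pos_INR.
    replace ((c - a - b) * (sum_n (hyp_coef a b c) N + hyp_coef a b c (S N))
             - (c - a) * (c - b) / c * (sum_n (hyp_coef a b (c + 1)) N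
                                          + hyp_coef a b c (S N) * (c / (c + INR (S N)))))
      with (((c - a - b) * sum_n (hyp_coef a b c) N
             - (c - a) * (c - b) / c * sum_n (hyp_coef a b (c + 1)) N)
            + hyp_coef a b c (S N) * ((c - a - b) * INR (S N) - a * b) / (c + INR (S N)))
      by (field; lra).
    rewrite IH, <- Hraabe. ring.
Qed.

Lemma Series_hyp_coef_contiguous (a b c : R) : 0 < a -> 0 < b -> a + b < c ->
  (c - a - b) * Series (hyp_coef a b c) = (c - a) * (c - b) / c * Series (hyp_coef a b (c + 1)).
Proof.
  intros Ha Hb Hc.
  assert (Hlim := is_lim_seq_minus' _ _ _ _
    (is_lim_seq_scal_l _ (c - a - b) _
       (is_lim_seq_sum_n_Series _ (ex_series_hyp_coef a b c Ha Hb Hc)))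
    (is_lim_seq_scal_l _ ((c - a) * (c - b) / c) _
       (is_lim_seq_sum_n_Series _ (ex_series_hyp_coef a b (c + 1) Ha Hb ltac:(lra))))).
  assert (Hzero : is_lim_seq (fun N => (c - a - b) * sum_n (hyp_coef a b c) N
                    - (c - a) * (c - b) / c * sum_n (hyp_coef a b (c + 1)) N) 0).
  { apply is_lim_seq_ext with (fun N => -1 * (INR (S N) * hyp_coef a b c (S N))).
    { intros N. rewrite sum_n_hyp_coef_contiguous by lra. ring. }
    replace (Finite 0) with (Rbar_mult (-1) 0) by (simpl; f_equal; ring).
    apply is_lim_seq_scal_l.
    apply (is_lim_seq_incr_1 (fun n => INR n * hyp_coef a b c n)).
    apply is_lim_seq_INR_mul_hyp_coef; assumption. }
  assert (Heq := is_lim_seq_unique _ _ Hzero).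
  rewrite (is_lim_seq_unique _ _ Hlim) in Heq. simpl in Heq. injection Heq. lra.
Qed.

Definition gauss_ratio (a b c : R) (n : nat) : R :=
  pochhammer (c - a) n * pochhammer (c - b) n / (pochhammer c n * pochhammer (c - a - b) n).

Lemma gauss_ratio_S_shift (a b c : R) (n : nat) : 0 < a -> 0 < b -> a + b < c ->
  gauss_ratio a b c (S n) = (c - a) * (c - b) / (c * (c - a - b)) * gauss_ratio a b (c + 1) n.
Proof.
  intros Ha Hb Hc. unfold gauss_ratio. rewrite !pochhammer_S_shift.
  replace (c + 1 - a - b) with (c - a - b + 1) by ring.
  replace (c + 1 - a) with (c - a + 1) by ring.
  replace (c + 1 - b) with (c - b + 1) by ring.
  assert (0 < pochhammer (c + 1) n) by (apply pochhammer_pos; lra).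
  assert (0 < pochhammer (c - a - b + 1) n) by (apply pochhammer_pos; lra).
  field. repeat split; lra.
Qed.

(* Iterating the contiguous relation n times, using only that the series is >= its first term 1. *)
Lemma gauss_ratio_le_Series (a b : R) (n : nat) (c : R) : 0 < a -> 0 < b -> a + b < c ->
  gauss_ratio a b c n <= Series (hyp_coef a b c).
Proof.
  intros Ha Hb. revert c. induction n as [|n IH]; intros c Hc.
  - replace (gauss_ratio a b c 0) with (sum_n (hyp_coef a b c) 0)
      by (rewrite sum_n_O_R, hyp_coef_O; unfold gauss_ratio; simpl; field).
    apply sum_n_le_Series; [|apply ex_series_hyp_coef; lra].
    intros k. left. apply hyp_coef_pos; lra.
  - rewrite gauss_ratio_S_shift by lra.
    assert (Hk : 0 < (c - a) * (c - b) / (c * (c - a - b))).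
    { apply Rdiv_lt_0_compat; apply Rmult_lt_0_compat; lra. }
    replace (Series (hyp_coef a b c))
      with ((c - a) * (c - b) / (c * (c - a - b)) * Series (hyp_coef a b (c + 1))).
    + apply Rmult_le_compat_l; [lra|]. apply IH. lra.
    + apply Rmult_eq_reg_l with (c - a - b); [|lra].
      rewrite Series_hyp_coef_contiguous by lra. field. lra.
Qed.

Lemma gauss_ratio_ge_1 (a b c : R) (n : nat) : 0 < a -> 0 < b -> a + b < c ->
  1 <= gauss_ratio a b c n.
Proof.
  intros Ha Hb Hc. induction n as [|n IH]; [unfold gauss_ratio; simpl; lra|].
  assert (Hn : 0 <= INR n) by apply pos_INR.
  assert (E : gauss_ratio a b c (S n) = gauss_ratio a b c n *
      ((c - a + INR n) * (c - b + INR n) / ((c + INR n) * (c - a - b + INR n)))).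
  { unfold gauss_ratio. simpl pochhammer.
    assert (0 < pochhammer c n) by (apply pochhammer_pos; lra).
    assert (0 < pochhammer (c - a - b) n) by (apply pochhammer_pos; lra).
    field. repeat split; lra. }
  assert (1 <= (c - a + INR n) * (c - b + INR n) / ((c + INR n) * (c - a - b + INR n))).
  { apply Rmult_le_reg_r with ((c + INR n) * (c - a - b + INR n)); [nra|].
    unfold Rdiv. rewrite Rmult_assoc, Rinv_l by nra. nra. }
  rewrite E. nra.
Qed.

Lemma gauss_ratio_eq_gauss_prod (a b c : R) (N : nat) : 0 < a -> 0 < b -> a + b < c ->
  gauss_ratio a b c (S N)
  = gauss_prod (INR N) c N * gauss_prod (INR N) (c - a - b) N
    / (gauss_prod (INR N) (c - a) N * gauss_prod (INR N) (c - b) N).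
Proof.
  intros Ha Hb Hc. unfold gauss_ratio, gauss_prod.
  assert (Epow : Rpower (INR N) c * Rpower (INR N) (c - a - b)
                 = Rpower (INR N) (c - a) * Rpower (INR N) (c - b))
    by (rewrite <- !Rpower_plus; f_equal; ring).
  assert (0 < pochhammer c (S N)) by (apply pochhammer_pos; lra).
  assert (0 < pochhammer (c - a) (S N)) by (apply pochhammer_pos; lra).
  assert (0 < pochhammer (c - b) (S N)) by (apply pochhammer_pos; lra).
  assert (0 < pochhammer (c - a - b) (S N)) by (apply pochhammer_pos; lra).
  assert (0 < INR (fact N)) by (apply lt_0_INR, lt_O_fact).
  assert (Hp1 := Rpower_pos (INR N) (c - a)). assert (Hp2 := Rpower_pos (INR N) (c - b)).
  replace (Rpower (INR N) c * INR (fact N) / pochhammer c (S N)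
           * (Rpower (INR N) (c - a - b) * INR (fact N) / pochhammer (c - a - b) (S N)))
    with (Rpower (INR N) c * Rpower (INR N) (c - a - b) * INR (fact N) ^ 2
          / (pochhammer c (S N) * pochhammer (c - a - b) (S N))) by (field; lra).
  rewrite Epow. field. repeat split; lra.
Qed.

Lemma is_lim_seq_gauss_ratio (a b c : R) : 0 < a -> 0 < b -> a + b < c ->
  is_lim_seq (fun N => gauss_ratio a b c (S N)) (Pfun a b c).
Proof.
  intros Ha Hb Hc.
  apply is_lim_seq_ext with (fun N => gauss_prod (INR N) c N * gauss_prod (INR N) (c - a - b) N
                   / (gauss_prod (INR N) (c - a) N * gauss_prod (INR N) (c - b) N)).
  { intros N. rewrite gauss_ratio_eq_gauss_prod; auto. }
  unfold Pfun. apply is_lim_seq_div'; [apply is_lim_seq_mult'; apply is_lim_seq_gauss_prod; lra ..|].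
  assert (0 < Gamma (c - a)) by (apply Gamma_pos; lra).
  assert (0 < Gamma (c - b)) by (apply Gamma_pos; lra). nra.
Qed.

Lemma Pfun_le_Series_hyp_coef (a b c : R) : 0 < a -> 0 < b -> a + b < c ->
  Pfun a b c <= Series (hyp_coef a b c).
Proof.
  intros Ha Hb Hc.
  apply (is_lim_seq_le (fun N => gauss_ratio a b c (S N)) (fun _ => Series (hyp_coef a b c))
           (Pfun a b c) (Series (hyp_coef a b c)));
    [| apply is_lim_seq_gauss_ratio; auto | apply is_lim_seq_const].
  intros N. apply gauss_ratio_le_Series; auto.
Qed.

Lemma Pfun_ge_1 (a b c : R) : 0 < a -> 0 < b -> a + b < c -> 1 <= Pfun a b c.
Proof.
  intros Ha Hb Hc.
  apply (is_lim_seq_le (fun _ => 1) (fun N => gauss_ratio a b c (S N)) 1 (Pfun a b c));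
    [| apply is_lim_seq_const | apply is_lim_seq_gauss_ratio; auto].
  intros N. apply gauss_ratio_ge_1; auto.
Qed.

(** * The binomial series *)

Definition binom_coef (sg : R) (m : nat) : R := pochhammer sg m / INR (fact m).

Lemma binom_coef_O (sg : R) : binom_coef sg 0 = 1.
Proof. unfold binom_coef. simpl. field. Qed.

Lemma binom_coef_S (sg : R) (m : nat) :
  binom_coef sg (S m) = binom_coef sg m * (sg + INR m) / INR (S m).
Proof.
  unfold binom_coef. simpl pochhammer.
  change (fact (S m)) with (S m * fact m)%nat. rewrite mult_INR.
  assert (0 < INR (fact m)) by (apply lt_0_INR, lt_O_fact).
  assert (0 < INR (S m)) by (apply lt_0_INR; lia).
  field. lra.
Qed.

Lemma binom_coef_bounds (sg : R) (m : nat) : 0 < sg <= 1 -> 0 < binom_coef sg m <= 1.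
Proof.
  intros Hsg. induction m as [|m IH]; [rewrite binom_coef_O; lra|].
  rewrite binom_coef_S, S_INR. assert (0 <= INR m) by apply pos_INR.
  assert (Hratio : 0 < (sg + INR m) / (INR m + 1) <= 1).
  { split; [apply Rdiv_lt_0_compat; lra | apply (Rdiv_le_1 (sg + INR m) (INR m + 1)); lra]. }
  unfold Rdiv in *. rewrite Rmult_assoc. split; nra.
Qed.

Lemma CV_radius_binom_coef (sg w : R) : 0 < sg <= 1 -> Rabs w < 1 ->
  Rbar_lt (Rabs w) (CV_radius (binom_coef sg)).
Proof.
  intros Hsg Hw. set (r := (1 + Rabs w) / 2).
  assert (Hr : Rabs w < r < 1) by (unfold r; lra).
  assert (Hw0 := Rabs_pos w).
  apply Rbar_lt_le_trans with (Finite r); [simpl; lra|].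
  apply (proj1 (CV_radius_bounded (binom_coef sg))). exists 1. intros n.
  destruct (binom_coef_bounds sg n Hsg).
  rewrite Rabs_mult, Rabs_pos_eq by lra. rewrite <- RPow_abs, (Rabs_pos_eq r) by lra.
  assert (0 <= r ^ n <= 1).
  { split; [apply pow_le; lra|].
    apply Rle_trans with (1 ^ n); [apply pow_incr; lra | rewrite pow1; lra]. }
  nra.
Qed.

Lemma binom_series_ode (sg t : R) : 0 < sg <= 1 -> Rabs t < 1 ->
  (1 - t) * PSeries (PS_derive (binom_coef sg)) t = sg * PSeries (binom_coef sg) t.
Proof.
  intros Hsg Ht.
  assert (Hr := CV_radius_binom_coef sg t Hsg Ht).
  assert (Hd : Rbar_lt (Rabs t) (CV_radius (PS_derive (binom_coef sg))))
    by (rewrite CV_radius_derive; exact Hr).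
  replace ((1 - t) * PSeries (PS_derive (binom_coef sg)) t)
    with (PSeries (PS_derive (binom_coef sg)) t - PSeries (PS_incr_1 (PS_derive (binom_coef sg))) t)
    by (rewrite PSeries_incr_1; ring).
  rewrite <- PSeries_minus, <- PSeries_scal;
    [| apply CV_radius_inside, Hd | apply ex_pseries_incr_1, CV_radius_inside, Hd].
  apply PSeries_ext. intros [|n].
  - unfold PS_minus, PS_incr_1, PS_scal, PS_derive, plus, opp, scal, zero; simpl.
    rewrite binom_coef_S, binom_coef_O. unfold mult; simpl. field.
  - unfold PS_minus, PS_incr_1, PS_scal, PS_derive, plus, opp, scal.
    rewrite (binom_coef_S sg (S n)), !S_INR. simpl; unfold mult; simpl.
    assert (0 <= INR n) by apply pos_INR. field. lra.
Qed.

(* The product (1 - t)^sg * sum_m binom_coef sg m t^m has derivative 0 by the ODE above. *)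
Lemma PSeries_binom_coef (sg w : R) : 0 < sg <= 1 -> -1 < w < 1 ->
  PSeries (binom_coef sg) w = Rpower (1 - w) (- sg).
Proof.
  intros Hsg Hw.
  set (phi := fun t => exp (sg * ln (1 - t)) * PSeries (binom_coef sg) t).
  assert (Hderiv : forall t, -1 < t < 1 -> is_derive phi t 0).
  { intros t Ht. assert (Hta : Rabs t < 1) by (apply Rabs_def1; lra).
    assert (Hode := binom_series_ode sg t Hsg Hta).
    assert (He := exp_pos (sg * ln (1 - t))).
    evar (l : R). replace 0 with l; unfold l.
    - apply (is_derive_mult (fun t => exp (sg * ln (1 - t))) (PSeries (binom_coef sg))).
      + auto_derive_fun (fun t => exp (sg * ln (1 - t))). intros Hd. apply Hd. lra.
      + apply is_derive_PSeries, CV_radius_binom_coef; assumption.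
      + intros; apply Rmult_comm.
    - unfold plus, mult; simpl. change (1 + - t) with (1 - t).
      replace (PSeries (PS_derive (binom_coef sg)) t) with (sg * PSeries (binom_coef sg) t / (1 - t))
        by (rewrite <- Hode; field; lra).
      field. lra. }
  assert (Hphi0 : phi 0 = 1).
  { unfold phi. rewrite PSeries_0, binom_coef_O, Rminus_0_r, ln_1, Rmult_0_r, exp_0. ring. }
  assert (Hphiw : phi w = 1).
  { assert (Hbetween : forall t, Rmin 0 w <= t <= Rmax 0 w -> -1 < t < 1)
      by (intros t; unfold Rmin, Rmax; destruct (Rle_dec 0 w); lra).
    destruct (MVT_gen phi 0 w (fun _ => 0)) as [t0 [_ Ht0]].
    - intros t Ht. apply Hderiv, Hbetween. lra.
    - intros t Ht. apply continuity_pt_filterlim.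
      apply (ex_derive_continuous (K := R_AbsRing) (V := R_NormedModule)).
      eexists. apply Hderiv, Hbetween, Ht.
    - rewrite Rmult_0_l in Ht0. lra. }
  unfold phi in Hphiw.
  rewrite Rpower_Ropp. unfold Rpower.
  assert (He := exp_pos (sg * ln (1 - w))).
  apply Rmult_eq_reg_l with (exp (sg * ln (1 - w))); [|lra].
  rewrite Hphiw. field. lra.
Qed.

(** * Tails and the estimate of F(a,b,c;1) - F(a,b,c;w) *)

Lemma ex_series_bounded_mul_pow (v : nat -> R) (B w : R) : (forall n, 0 <= v n <= B) ->
  0 <= w < 1 -> ex_series (fun n => v n * w ^ n).
Proof.
  intros Hv Hw.
  apply (ex_series_le (K := R_AbsRing) (V := R_CompleteNormedModule) _ (fun n => B * w ^ n)).
  - intros n. change (Rabs (v n * w ^ n) <= B * w ^ n).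
    specialize (Hv n). assert (0 <= w ^ n) by (apply pow_le; lra).
    rewrite Rabs_pos_eq by (apply Rmult_le_pos; lra).
    apply Rmult_le_compat_r; lra.
  - apply (ex_series_scal_l (K := R_AbsRing) (V := R_NormedModule) B (fun n => w ^ n)).
    apply ex_series_geom. rewrite Rabs_pos_eq; lra.
Qed.

Lemma sum_n_nonneg (u : nat -> R) (N : nat) : (forall n, 0 <= u n) -> 0 <= sum_n u N.
Proof.
  intros Hu. apply Rle_trans with (sum_n u 0); [rewrite sum_n_O_R; apply Hu|].
  replace N with (0 + N)%nat by lia. apply sum_n_le_add, Hu.
Qed.

Lemma ex_series_nonneg_mul_pow (u : nat -> R) (w : R) : (forall n, 0 <= u n) -> ex_series u ->
  0 <= w < 1 -> ex_series (fun n => u n * w ^ n).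
Proof.
  intros Hu Hex Hw. apply (ex_series_bounded_mul_pow _ (Series u)); [|exact Hw].
  intros n. split; [apply Hu|].
  apply Rle_trans with (sum_n u n); [|apply sum_n_le_Series; assumption].
  destruct n as [|n]; [rewrite sum_n_O_R; lra|].
  rewrite sum_n_Sn_R. assert (0 <= sum_n u n) by (apply sum_n_nonneg, Hu). lra.
Qed.

Lemma Series_mul_pow_tails (u : nat -> R) (w : R) : (forall n, 0 <= u n) -> ex_series u ->
  0 <= w < 1 ->
  let T := fun m => (Series u - sum_n u m) * w ^ m in
  ex_series T /\ Series u - Series (fun n => u n * w ^ n) = (1 - w) * Series T.
Proof.
  intros Hu Hex Hw T.
  assert (Htail : forall m, 0 <= Series u - sum_n u m <= Series u).
  { intros m. assert (sum_n u m <= Series u) by (apply sum_n_le_Series; assumption).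
    assert (0 <= sum_n u m) by (apply sum_n_nonneg, Hu). lra. }
  assert (HexT : ex_series T) by (apply (ex_series_bounded_mul_pow _ (Series u)); assumption).
  assert (Hexu := ex_series_nonneg_mul_pow u w Hu Hex Hw).
  split; [exact HexT|].
  assert (Hpartial : forall M, (1 - w) * sum_n T M + sum_n (fun n => u n * w ^ n) M
                               + (Series u - sum_n u M) * w ^ S M = Series u).
  { unfold T. induction M as [|M IH]; [rewrite !sum_n_O_R; simpl; ring|].
    rewrite !sum_n_Sn_R. etransitivity; [|exact IH]. simpl. ring. }
  assert (Hrem : is_lim_seq (fun M => (Series u - sum_n u M) * w ^ S M) 0).
  { apply is_lim_seq_le_le with (fun _ => 0) (fun M => Series u * w ^ S M).
    - intros M. specialize (Htail M). assert (0 <= w ^ S M) by (apply pow_le; lra).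
      split; [apply Rmult_le_pos|apply Rmult_le_compat_r]; lra.
    - apply is_lim_seq_const.
    - replace (Finite 0) with (Rbar_mult (Series u) 0) by (simpl; f_equal; ring).
      apply is_lim_seq_scal_l, (is_lim_seq_incr_1 (fun n => w ^ n)), is_lim_seq_geom.
      rewrite Rabs_pos_eq; lra. }
  assert (Hlim := is_lim_seq_plus' _ _ _ _
    (is_lim_seq_plus' _ _ _ _
       (is_lim_seq_scal_l _ (1 - w) _ (is_lim_seq_sum_n_Series _ HexT))
       (is_lim_seq_sum_n_Series _ Hexu)) Hrem).
  apply (is_lim_seq_ext _ (fun _ => Series u) _ Hpartial), is_lim_seq_unique in Hlim.
  rewrite Lim_seq_const in Hlim. injection Hlim. lra.
Qed.

Lemma ex_series_binom_coef_mul_pow (sg w : R) : 0 < sg <= 1 -> Rabs w < 1 ->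
  ex_series (fun m => binom_coef sg m * w ^ m).
Proof.
  intros Hsg Hw.
  destruct (CV_radius_inside (binom_coef sg) w (CV_radius_binom_coef sg w Hsg Hw)) as [l Hl].
  exists l. revert Hl. apply is_series_ext.
  intros m. rewrite pow_n_pow. apply Rmult_comm.
Qed.

Section TailEstimate.

Variables a b c : R.
Hypothesis a_pos : 0 < a.
Hypothesis b_pos : 0 < b.
Hypothesis abc_lower : a + b < c.
Hypothesis abc_upper : c < a + b + 1.

Let sg := a + b + 1 - c.

Lemma sg_bounds : 0 < sg <= 1.
Proof. unfold sg. lra. Qed.

Definition hyp_binom_ratio (n : nat) : R :=
  pochhammer a (S n) * pochhammer b (S n) / (pochhammer c (S n) * pochhammer sg n).

Lemma hyp_coef_S_eq_binom (k : nat) :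
  hyp_coef a b c (S k) = hyp_binom_ratio k * binom_coef sg k / INR (S k).
Proof.
  unfold hyp_coef, hyp_binom_ratio, binom_coef. assert (Hsg := sg_bounds).
  change (fact (S k)) with (S k * fact k)%nat. rewrite mult_INR.
  assert (0 < pochhammer c (S k)) by (apply pochhammer_pos; lra).
  assert (0 < pochhammer sg k) by (apply pochhammer_pos; lra).
  assert (0 < INR (fact k)) by (apply lt_0_INR, lt_O_fact).
  assert (0 < INR (S k)) by (apply lt_0_INR; lia).
  field. repeat split; lra.
Qed.

Lemma hyp_binom_ratio_lt_S (n : nat) : hyp_binom_ratio n < hyp_binom_ratio (S n).
Proof.
  assert (Hsg := sg_bounds).
  assert (E : hyp_binom_ratio (S n) = hyp_binom_ratio n
            * ((a + INR (S n)) * (b + INR (S n)) / ((c + INR (S n)) * (sg + INR n)))).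
  { unfold hyp_binom_ratio.
    change (pochhammer a (S (S n))) with (pochhammer a (S n) * (a + INR (S n))).
    change (pochhammer b (S (S n))) with (pochhammer b (S n) * (b + INR (S n))).
    change (pochhammer c (S (S n))) with (pochhammer c (S n) * (c + INR (S n))).
    change (pochhammer sg (S n)) with (pochhammer sg n * (sg + INR n)).
    assert (0 < pochhammer c (S n)) by (apply pochhammer_pos; lra).
    assert (0 < pochhammer sg n) by (apply pochhammer_pos; lra).
    assert (0 <= INR n) by apply pos_INR. rewrite S_INR.
    field. repeat split; lra. }
  assert (Hpos : 0 < hyp_binom_ratio n).
  { unfold hyp_binom_ratio.
    apply Rdiv_lt_0_compat; apply Rmult_lt_0_compat; apply pochhammer_pos; lra. }
  assert (Hn := pos_INR n). rewrite S_INR in E.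
  (* (a + n + 1)(b + n + 1) - (c + n + 1)(sg + n) = (c - a)(c - b) > 0 *)
  assert (1 < (a + (INR n + 1)) * (b + (INR n + 1)) / ((c + (INR n + 1)) * (sg + INR n))).
  { apply Rmult_lt_reg_r with ((c + (INR n + 1)) * (sg + INR n)); [nra|].
    unfold Rdiv. rewrite Rmult_assoc, Rinv_l by nra. unfold sg. nra. }
  rewrite E. nra.
Qed.

Lemma hyp_binom_ratio_eq_gauss_prod (N : nat) : let M := INR (S N) in
  hyp_binom_ratio (S N)
  = gauss_prod M c (S N) * gauss_prod M sg (S N) / (gauss_prod M a (S N) * gauss_prod M b (S N))
    * ((sg + M) / M).
Proof.
  intros M. unfold hyp_binom_ratio, gauss_prod. assert (Hsg := sg_bounds).
  assert (HM : 0 < M) by (apply lt_0_INR; lia).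
  replace (pochhammer sg (S N)) with (pochhammer sg (S (S N)) / (sg + M))
    by (change (pochhammer sg (S (S N))) with (pochhammer sg (S N) * (sg + M)); field; lra).
  assert (Epow : Rpower M c * Rpower M sg = Rpower M a * Rpower M b * M).
  { rewrite <- Rpower_plus.
    replace (c + sg) with (a + b + 1) by (unfold sg; ring).
    rewrite !Rpower_plus, Rpower_1 by exact HM. reflexivity. }
  assert (0 < pochhammer a (S (S N))) by (apply pochhammer_pos; lra).
  assert (0 < pochhammer b (S (S N))) by (apply pochhammer_pos; lra).
  assert (0 < pochhammer c (S (S N))) by (apply pochhammer_pos; lra).
  assert (0 < pochhammer sg (S (S N))) by (apply pochhammer_pos; lra).
  assert (0 < INR (fact (S N))) by (apply lt_0_INR, lt_O_fact).
  assert (Ha' := Rpower_pos M a). assert (Hb' := Rpower_pos M b).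
  assert (Hc' := Rpower_pos M c). assert (Hs' := Rpower_pos M sg).
  replace (Rpower M c) with (Rpower M a * Rpower M b * M / Rpower M sg)
    by (rewrite <- Epow; field; lra).
  field. repeat split; lra.
Qed.

Lemma is_lim_seq_hyp_binom_ratio : is_lim_seq hyp_binom_ratio ((c - a - b) * Qfun a b c).
Proof.
  assert (Hsg := sg_bounds).
  assert (Ga := Gamma_pos a a_pos). assert (Gb := Gamma_pos b b_pos).
  replace ((c - a - b) * Qfun a b c) with (Gamma c * Gamma sg / (Gamma a * Gamma b) * 1)
    by (unfold Qfun, sg; field; repeat split; lra).
  apply is_lim_seq_incr_1.
  apply is_lim_seq_ext with (fun N => let M := INR (S N) in
    gauss_prod M c (S N) * gauss_prod M sg (S N) / (gauss_prod M a (S N) * gauss_prod M b (S N))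
    * ((sg + M) / M)).
  { intros N. rewrite hyp_binom_ratio_eq_gauss_prod. reflexivity. }
  apply is_lim_seq_mult'.
  - apply (is_lim_seq_incr_1 (fun N =>
      gauss_prod (INR N) c N * gauss_prod (INR N) sg N
      / (gauss_prod (INR N) a N * gauss_prod (INR N) b N))).
    apply is_lim_seq_div'; [apply is_lim_seq_mult'; apply is_lim_seq_gauss_prod; lra ..|].
    apply Rgt_not_eq, Rmult_lt_0_compat; assumption.
  - apply is_lim_seq_ext with (fun N => 1 + sg * / INR (S N)).
    { intros N. assert (0 < INR (S N)) by (apply lt_0_INR; lia). field. lra. }
    replace (Finite 1) with (Finite (1 + sg * 0)) by (f_equal; ring).
    apply is_lim_seq_plus'; [apply is_lim_seq_const|].
    apply (is_lim_seq_scal_l _ sg (Finite 0)).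
    apply (is_lim_seq_incr_1 (fun N => / INR N)).
    replace (Finite 0) with (Rbar_inv p_infty) by reflexivity.
    apply is_lim_seq_inv; [apply is_lim_seq_INR | discriminate].
Qed.

Lemma hyp_binom_ratio_lt_lim (n : nat) : hyp_binom_ratio n < (c - a - b) * Qfun a b c.
Proof.
  apply Rlt_le_trans with (hyp_binom_ratio (S n)); [apply hyp_binom_ratio_lt_S|].
  apply (is_lim_seq_le (fun _ => hyp_binom_ratio (S n)) (fun k => hyp_binom_ratio (k + S n))
           (hyp_binom_ratio (S n)) ((c - a - b) * Qfun a b c));
    [| apply is_lim_seq_const | apply is_lim_seq_incr_n, is_lim_seq_hyp_binom_ratio].
  intros k. induction k as [|k IH]; [right; reflexivity|].
  apply Rle_trans with (hyp_binom_ratio (k + S n)); [exact IH|].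
  left. apply hyp_binom_ratio_lt_S.
Qed.

Lemma hyp_coef_S_lt (k : nat) :
  hyp_coef a b c (S k) < Qfun a b c * (binom_coef sg k - binom_coef sg (S k)).
Proof.
  assert (Hsg := sg_bounds). assert (Hk : 0 < INR (S k)) by (apply lt_0_INR; lia).
  assert (Hb := binom_coef_bounds sg k Hsg).
  replace (Qfun a b c * (binom_coef sg k - binom_coef sg (S k)))
    with ((c - a - b) * Qfun a b c * binom_coef sg k / INR (S k))
    by (rewrite binom_coef_S, S_INR in *; unfold sg; field; lra).
  rewrite hyp_coef_S_eq_binom.
  unfold Rdiv. apply Rmult_lt_compat_r; [apply Rinv_0_lt_compat, Hk|].
  apply Rmult_lt_compat_r; [lra | apply hyp_binom_ratio_lt_lim].
Qed.

Lemma Qfun_pos : 0 < Qfun a b c.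
Proof.
  assert (Hsg := sg_bounds). unfold Qfun. fold sg.
  assert (0 < Gamma c) by (apply Gamma_pos; lra).
  assert (0 < Gamma sg) by (apply Gamma_pos; lra).
  assert (0 < Gamma a) by (apply Gamma_pos; lra).
  assert (0 < Gamma b) by (apply Gamma_pos; lra).
  apply Rdiv_lt_0_compat; repeat apply Rmult_lt_0_compat; lra.
Qed.

Let A := hyp_coef a b c.

Lemma hyp_tail_le (m : nat) : Series A - sum_n A m <= Qfun a b c * binom_coef sg m.
Proof.
  assert (Hsg := sg_bounds).
  assert (Hblock : forall k, sum_n A (k + m) <= sum_n A m + Qfun a b c * binom_coef sg m).
  { intros k.
    assert (Htelescope : sum_n A (m + k) - sum_n A m + Qfun a b c * binom_coef sg (m + k)
                         <= Qfun a b c * binom_coef sg m).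
    { induction k as [|k IH]; [rewrite Nat.add_0_r; lra|].
      rewrite Nat.add_succ_r, sum_n_Sn_R. assert (H1 := hyp_coef_S_lt (m + k)). unfold A in *. lra. }
    rewrite Nat.add_comm.
    assert (0 <= Qfun a b c * binom_coef sg (m + k))
      by (apply Rmult_le_pos; [left; apply Qfun_pos | left; apply binom_coef_bounds, Hsg]).
    lra. }
  assert (Hlim := proj1 (is_lim_seq_incr_n _ m _)
                    (is_lim_seq_sum_n_Series A (ex_series_hyp_coef a b c a_pos b_pos abc_lower))).
  assert (Hle := is_lim_seq_le _ (fun _ => sum_n A m + Qfun a b c * binom_coef sg m) _ _
                   Hblock Hlim (is_lim_seq_const _)).
  simpl in Hle. lra.
Qed.

Lemma hyp_tail_O_lt : Series A - sum_n A 0 < Qfun a b c.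
Proof.
  assert (Hsplit : Series A - sum_n A 0 = A 1%nat + (Series A - sum_n A 1)).
  { rewrite sum_n_Sn_R. ring. }
  assert (H1 := hyp_coef_S_lt 0). assert (H2 := hyp_tail_le 1).
  rewrite binom_coef_O in H1. unfold A in *. lra.
Qed.

Lemma Series_sub_hyp2F1_lt (w : R) : 0 < w < 1 ->
  Series A - hyp2F1 a b c w < Qfun a b c * Rpower (1 - w) (c - a - b).
Proof.
  intros Hw. assert (Hsg := sg_bounds). assert (HQ := Qfun_pos).
  assert (HA : forall n, 0 <= A n) by (intros n; left; apply hyp_coef_pos; lra).
  destruct (Series_mul_pow_tails A w HA (ex_series_hyp_coef a b c a_pos b_pos abc_lower)
              ltac:(lra)) as [HexT Habel].
  set (T := fun m => (Series A - sum_n A m) * w ^ m) in *.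
  set (Bw := fun m => binom_coef sg m * w ^ m).
  assert (HexB : ex_series Bw)
    by (apply ex_series_binom_coef_mul_pow; [exact Hsg | rewrite Rabs_pos_eq; lra]).
  set (gap := fun m => Qfun a b c * Bw m - T m).
  assert (Hgap : forall m, 0 <= gap m).
  { intros m. unfold gap, Bw, T. rewrite <- Rmult_assoc, <- Rmult_minus_distr_r.
    apply Rmult_le_pos; [|apply pow_le; lra]. assert (H := hyp_tail_le m). lra. }
  assert (Hexgap : ex_series gap)
    by (apply (ex_series_minus (K := R_AbsRing) (V := R_NormedModule));
          [apply (ex_series_scal_l (K := R_AbsRing) (V := R_NormedModule)) |]; assumption).
  assert (Hgap0 : 0 < gap 0%nat).
  { unfold gap, Bw, T. rewrite binom_coef_O. simpl. assert (H := hyp_tail_O_lt). lra. }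
  assert (HgapS : Series gap = Qfun a b c * Series Bw - Series T).
  { unfold gap. rewrite Series_minus, Series_scal_l;
      [reflexivity | apply (ex_series_scal_l (K := R_AbsRing) (V := R_NormedModule)), HexB | exact HexT]. }
  assert (Hgap_pos : 0 < Series gap).
  { apply Rlt_le_trans with (sum_n gap 0); [rewrite sum_n_O_R; exact Hgap0|].
    apply sum_n_le_Series; assumption. }
  assert (HBw : Series Bw = Rpower (1 - w) (- sg)) by (apply PSeries_binom_coef; lra).
  assert (Epow : (1 - w) * Rpower (1 - w) (- sg) = Rpower (1 - w) (c - a - b)).
  { rewrite <- (Rpower_1 (1 - w)) at 1 by lra. rewrite <- Rpower_plus. f_equal. unfold sg. ring. }
  rewrite hyp2F1_Series. fold A. rewrite Habel, <- Epow, <- HBw.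
  apply Rmult_lt_compat_l with (r := 1 - w) in Hgap_pos; [|lra]. nra.
Qed.

End TailEstimate.

Lemma hyp2F1_ge_1 (a b c w : R) : 0 < a -> 0 < b -> a + b < c -> 0 < w < 1 -> 1 <= hyp2F1 a b c w.
Proof.
  intros Ha Hb Hc Hw.
  assert (HA : forall n, 0 <= hyp_coef a b c n * w ^ n).
  { intros n. apply Rmult_le_pos; [left; apply hyp_coef_pos; lra | apply pow_le; lra]. }
  rewrite hyp2F1_Series.
  apply Rle_trans with (sum_n (fun n => hyp_coef a b c n * w ^ n) 0).
  - rewrite sum_n_O_R, hyp_coef_O. simpl. lra.
  - apply sum_n_le_Series; [exact HA|].
    apply ex_series_nonneg_mul_pow; [|apply ex_series_hyp_coef|]; intros; try lra.
    left; apply hyp_coef_pos; lra.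
Qed.

Lemma square_gt_of_linear_bound (F P Q t q : R) :
  1 <= F -> 1 <= P -> 0 < Q -> 0 < t < 1 -> P - Q * t < F ->
  (q = Q /\ Q <= P \/ q = P - 1 /\ P < Q) ->
  F ^ 2 > P ^ 2 - 2 * P * Q * t + q ^ 2 * (t * t).
Proof.
  intros HF HP HQ Ht HFP [[-> HQP] | [-> HPQ]].
  - assert (Q * t < Q) by nra.
    assert (F ^ 2 > (P - Q * t) ^ 2) by nra.
    nra.
  - destruct (Rle_dec 0 (P - Q * t)) as [Hnonneg | Hneg].
    + assert (F ^ 2 > (P - Q * t) ^ 2) by nra.
      assert ((P - 1) ^ 2 <= Q ^ 2) by (clear - HP HPQ; nra).
      assert ((P - 1) ^ 2 * (t * t) <= Q ^ 2 * (t * t)) by (apply Rmult_le_compat_r; nra).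
      nra.
    + (* the right-hand side is then at most P^2 - 2 P^2 + (P - 1)^2 = 1 - 2 P < 1 <= F^2 *)
      assert (- 2 * P * Q * t <= - 2 * P * P) by nra.
      assert ((P - 1) ^ 2 * (t * t) <= (P - 1) ^ 2).
      { assert (0 <= (P - 1) ^ 2) by nra. assert (t * t <= 1) by nra. nra. }
      nra.
Qed.

Theorem lemma5p3 (a b c w : R) :
  0 < a -> 0 < b -> a + b < c -> c < a + b + 1 ->
  0 < w < 1 ->
  hyp2F1 a b c w ^ 2 >
    Pfun a b c ^ 2
    - 2 * Pfun a b c * Qfun a b c * Rpower (1 - w) (c - a - b)
    + qfun a b c ^ 2 * Rpower (1 - w) (2 * (c - a - b)).
Proof.
  intros Ha Hb Hc_lower Hc_upper Hw.
  set (t := Rpower (1 - w) (c - a - b)).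
  assert (Ht : 0 < t < 1).
  { split; [apply Rpower_pos|].
    assert (ln (1 - w) < 0) by (rewrite <- ln_1; apply ln_increasing; lra).
    assert (0 < (c - a - b) * - ln (1 - w)) by (apply Rmult_lt_0_compat; lra).
    rewrite <- exp_0. apply exp_increasing. lra. }
  assert (Et2 : Rpower (1 - w) (2 * (c - a - b)) = t * t)
    by (unfold t; rewrite <- Rpower_plus; f_equal; ring).
  rewrite Et2.
  apply square_gt_of_linear_bound.
  - apply hyp2F1_ge_1; lra.
  - apply Pfun_ge_1; lra.
  - apply Qfun_pos; lra.
  - exact Ht.
  - assert (HPS := Pfun_le_Series_hyp_coef a b c Ha Hb Hc_lower).
    assert (Htail := Series_sub_hyp2F1_lt a b c Ha Hb Hc_lower Hc_upper w Hw).
    fold t in Htail. lra.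
  - unfold qfun. destruct (Rle_dec (Qfun a b c) (Pfun a b c)); [left | right]; split; lra.
Qed.
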